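(* If a depth-proper mttr $M$ is finite-ML-nesting, then $M$ is LHI, i.e., there is $b\in\mathbb N$ with $H(M(t))\le b\cdot H(t)$ for all input trees $t$.
   Context: Trees: for a ranked alphabet $\Sigma$, $T_\Sigma$ is the set of finite ranked ordered trees over $\Sigma$, and $T_\Sigma(A)$ the trees over $\Sigma$ with additional rank-0 symbols from $A$. $X_k=\{x_1,\dots,x_k\}$ are input variables and $Y=\{y_1,y_2,\dots\}$, $Y_m=\{y_1,\dots,y_m\}$ are parameters. A (deterministic bottom-up) tree automaton $(P,\Sigma,h)$ has a finite state set $P$ and maps $h_\sigma:P^k\to P$ for $\sigma\in\Sigma^{(k)}$; $\hat h:T_\Sigma\to P$ is its run and $L_p=\{s\in T_\Sigma\mid \hat h(s)=p\}$. A (total, deterministic) macro tree transducer with look-ahead (mttr) is $M=(Q,P,\Sigma,\Delta,q_0,R,h)$ where $Q$ is a ranked alphabet of states, $\Sigma,\Delta$ are ranked input/output alphabets, $(P,\Sigma,h)$ is a tree automaton (the look-ahead), $q_0\in Q^{(0)}$, and for each $q\in Q^{(m)}$, $\sigma\in\Sigma^{(k)}$, $p_1,\dots,p_k\in P$ there is exactly one rule $\langle q,\sigma(x_1:p_1,\dots,x_k:p_k)\rangle(y_1,\dots,y_m)\to t$ with $t\in T_{\Delta\cup\langle Q,X_k\rangle}(Y_m)$, where $\langle q',x_i\rangle$ has the rank of $q'$. For $q\in Q^{(m)}$ and $s=\sigma(s_1,\dots,s_k)$, $M_q(s)\in T_\Delta(Y_m)$ is obtained from the right-hand side of the rule for $(q,\sigma,\hat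 h(s_1),\dots,\hat h(s_k))$ by replacing (recursively, innermost first) each subtree $\langle q',x_i\rangle(\xi_1,\dots,\xi_n)$ by $M_{q'}(s_i)$ with each $y_j$ replaced by (the result for) $\xi_j$; $M(s)=M_{q_0}(s)$. Extension and reachability: $\hat M$ is the mttr with input alphabet $\Sigma\cup P$ (each $p\in P$ a rank-0 input symbol with $\hat h_p()=p$), output alphabet $\Delta\cup\langle Q,P\rangle$ (where $\langle q,p\rangle$ has the rank of $q$), the rules of $M$ plus the rules $\langle q,p\rangle(y_1,\dots,y_m)\to\langle q,p\rangle(y_1,\dots,y_m)$ for $q\in Q^{(m)}$, $p\in P$. A pair $\langle q,p\rangle$ is reachable if it occurs in $\hat M(s)$ for some $s\in T_\Sigma(P)$. Depth-proper: for $y\in Y$ and $s\in T_\Delta(Y)$, $\lfloor s\rfloor_y$ is obtained from $s$ by replacing every maximal subtree not containing $y$ by a new rank-0 symbol $\$$. $M$ is depth-proper if for every reachable $\langle q,p\rangle$ with $q\in Q^{(m)}$ and every $y\in Y_m$, the set $\{\lfloor M_q(s)\rfloor_y\mid s\in L_p\}$ is infinite. Height: $H(t)$ is the number of nodes on a longest root-to-leaf path of $t$. ML-nesting: for $t\in T_\Sigma(P)$, the nesting of a root-to-leaf path of $\hat M(t)$ is the number of its nodes labeled by symbols of $\langle Q,P\rangle$. $M$ is finite-ML-nesting if there is $b\in\mathbb N$ such that for every $t\in T_\Sigma(P)$ (with any number of leaves labeled by symbols of $P$), every root-to-leaf path of $\hat M(t)$ has nesting at most $b$. *)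

From mathcomp Require Import all_boot.
From Stdlib Require List.
Set Implicit Arguments. Unset Strict Implicit. Unset Printing Implicit Defensive.

(* Finite ordered labelled trees (ranks checked by separate predicates). *)
Inductive tree (A : Type) : Type := Node : A -> seq (tree A) -> tree A.
Arguments Node {A}.

Fixpoint height A (t : tree A) : nat :=
  match t with Node _ ch => (foldr maxn 0 (map (@height A) ch)).+1 end.

Fixpoint paths A (t : tree A) : seq (seq A) :=
  match t with
  | Node a ch => if ch is [::] then [:: [:: a]]
                 else map (cons a) (flatten (map (@paths A) ch))
  end.

(* Right-hand sides: trees over Delta u <Q,X_k> u Y_m.
   RCall q i args = <q, x_(i+1)>(args);  RPar j = y_(j+1)  (0-based indices). *)
Inductive rhs (D Q : Type) : Type :=
  | RD : D -> seq (rhs D Q) -> rhs D Q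
  | RCall : Q -> nat -> seq (rhs D Q) -> rhs D Q
  | RPar : nat -> rhs D Q.
Arguments RPar {D Q}.

(* Output labels of the extension \hat M : Delta u <Q,P> u Y  (OY j = y_(j+1)). *)
Inductive olab (D Q P : Type) : Type :=
  | OD : D -> olab D Q P
  | OQP : Q -> P -> olab D Q P
  | OY : nat -> olab D Q P.
Arguments OY {D Q P}.

(* Totality/determinism: rules is a function (q, sigma, p_1..p_k) |-> rhs. *)
Unset Implicit Arguments.
Record mttr (S D : finType) := MTTR {
  st : finType;
  rkQ : st -> nat;
  la : finType;
  lah : S -> seq la -> la;
  q0 : st;
  rules : st -> S -> seq la -> rhs D st
}.


Set Implicit Arguments.
Arguments MTTR {S D}.
Arguments st {S D}.
Arguments rkQ {S D}.
Arguments la {S D}.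
Arguments lah {S D}.
Arguments q0 {S D}.
Arguments rules {S D}.

Section MTTR.
Variables (S D : finType) (rkS : S -> nat) (rkD : D -> nat).

Variable M : mttr S D.
Notation Q := (st M). Notation P := (la M).
Notation otree := (tree (olab D Q P)).

Fixpoint wf_rhs (k m : nat) (r : rhs D Q) : bool :=
  match r with
  | RD d args => (size args == rkD d) && all (wf_rhs k m) args
  | RCall q i args => (i < k) && (size args == rkQ M q) && all (wf_rhs k m) args
  | RPar j => j < m
  end.

Definition wf_mttr : Prop :=
  rkQ M (q0 M) = 0 /\
  forall q s ps, size ps = rkS s -> wf_rhs (rkS s) (rkQ M q) (rules M q s ps).

(* Input trees in T_Sigma(P): labels inl sigma (rank rkS sigma) or inr p (rank 0). *)
Fixpoint in_TSP (t : tree (S + P)) : bool :=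
  match t with
  | Node (inl s) ch => (size ch == rkS s) && all in_TSP ch
  | Node (inr _) ch => nilp ch
  end.

Fixpoint in_TS (t : tree (S + P)) : bool :=
  match t with
  | Node (inl s) ch => (size ch == rkS s) && all in_TS ch
  | Node (inr _) _ => false
  end.

Fixpoint hrun (t : tree (S + P)) : P :=
  match t with
  | Node (inl s) ch => lah M s (map hrun ch)
  | Node (inr p) _ => p
  end.

Definition Lp (p : P) (t : tree (S + P)) : Prop := in_TS t /\ hrun t = p.

Fixpoint subst (t : otree) (args : seq otree) : otree :=
  match t with
  | Node (OY j) ch => nth (Node (OY j) ch) args j
  | Node l ch => Node l (map (fun c => subst c args) ch)
  end.

Definition dummy : otree := Node (OY 0) [::].

(* evaluation of a rhs, given the translations M_q'(s_i) of the subtrees *)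
Fixpoint interp (evs : seq (Q -> otree)) (r : rhs D Q) : otree :=
  match r with
  | RD d args => Node (OD _ _ d) (map (interp evs) args)
  | RCall q i args => subst (nth (fun _ => dummy) evs i q) (map (interp evs) args)
  | RPar j => Node (OY j) [::]
  end.

(* \hat M_q(s) for s in T_Sigma(P); on T_Sigma it coincides with M_q(s).
   A p-leaf is translated by the extra rule <q,p>(y_1..y_m) -> <q,p>(y_1..y_m). *)
Fixpoint evalq (t : tree (S + P)) : Q -> otree :=
  match t with
  | Node (inl s) ch =>
      let evs := map evalq ch in
      fun q => interp evs (rules M q s (map hrun ch))
  | Node (inr p) _ =>
      fun q => Node (OQP _ q p) (mkseq (fun j => Node (OY j) [::]) (rkQ M q))
  end.

Definition Mq (q : Q) (t : tree (S + P)) : otree := evalq t q.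
Definition Mhat (t : tree (S + P)) : otree := evalq t (q0 M).

Definition is_QP (q : Q) (p : P) (l : olab D Q P) : bool :=
  if l is OQP q' p' then (q' == q) && (p' == p) else false.

Fixpoint occurs (f : olab D Q P -> bool) (t : otree) : bool :=
  match t with Node l ch => f l || has (occurs f) ch end.

Definition reachable (q : Q) (p : P) : Prop :=
  exists t, in_TSP t /\ occurs (is_QP q p) (Mhat t).

Definition is_Y (j : nat) (l : olab D Q P) : bool :=
  if l is OY j' then j' == j else false.

(* |_ s _|_y : maximal subtrees not containing y replaced by $ (= None). *)
Fixpoint cut (j : nat) (t : otree) : tree (option (olab D Q P)) :=
  match t with
  | Node l ch => if occurs (is_Y j) t then Node (Some l) (map (cut j) ch)
                 else Node None [::]
  end.

Definition depth_proper : Prop :=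
  forall q p, reachable q p ->
  forall j, j < rkQ M q ->
  ~ (exists l : list (tree (option (olab D Q P))),
       forall t, Lp p t -> List.In (cut j (Mq q t)) l).

Definition is_QPlab (l : olab D Q P) : bool := if l is OQP _ _ then true else false.

Definition nesting (pi : seq (olab D Q P)) : nat := count is_QPlab pi.

Definition finite_ML_nesting : Prop :=
  exists b : nat, forall t, in_TSP t ->
    forall pi, List.In pi (paths (Mhat t)) -> nesting pi <= b.

Definition LHI : Prop :=
  exists b : nat, forall t, in_TS t -> height (Mhat t) <= b * height t.

End MTTR.

(* For an input t of height h >= 3, cut t at depth h - 2: every
   subtree s_i hanging below the cut is replaced by the leaf p_i = h(s_i).
   The resulting tree t' is in T_Sigma(P) and has height < h.  The output
   M(t) arises from \hat M(t') by replacing every node <q,p_i>(xi_1..xi_m)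
   by M_q(s_i) with its parameters instantiated by the (translated) xi_j.
   Since the s_i have height <= 2, each M_q(s_i) has height at most some
   constant c, so H(M(t)) is at most the "weighted height" of \hat M(t') in
   which <Q,P>-nodes weigh c and all other nodes weigh 1.  Along a path this
   weight is at most (length of the path) + c * (nesting of the path), so
   H(M(t)) <= H(\hat M(t')) + c * b, with b the ML-nesting bound.  Induction
   on the height of t in T_Sigma(P) then gives H(\hat M(t)) <= (c + c b) H(t). *)

From mathcomp Require Import all_boot zify.
From Stdlib Require List.
Set Implicit Arguments. Unset Strict Implicit. Unset Printing Implicit Defensive.

Definition maxs (s : seq nat) := foldr maxn 0 s.

Lemma maxs_le s K : (forall x, List.In x s -> x <= K) -> maxs s <= K.
Proof.
elim: s => [|a s IH] H //=; rewrite geq_max H /= ?IH //; last by left.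
by move=> x Hx; apply: H; right.
Qed.

Lemma leq_maxs s x : List.In x s -> x <= maxs s.
Proof.
elim: s => [|a s IH] //= [<-|Hx]; first exact: leq_maxl.
exact: leq_trans (IH Hx) (leq_maxr _ _).
Qed.

Lemma maxs_nth_le T U (x0 : T) (y0 : U) (f : T -> nat) (g : U -> nat) A B :
  size A = size B -> (forall j, j < size A -> f (nth x0 A j) <= g (nth y0 B j)) ->
  maxs (map f A) <= maxs (map g B).
Proof.
elim: A B => [|a A IH] [|b B] //= [Hs] H.
rewrite geq_max (leq_trans (H 0 isT) (leq_maxl _ _)) /=.
exact: leq_trans (IH B Hs (fun j hj => H j.+1 hj)) (leq_maxr _ _).
Qed.

Lemma maxs_attained T (f : T -> nat) s :
  s <> [::] -> exists x, List.In x s /\ maxs (map f s) = f x.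
Proof.
elim: s => [|a [|b s] IH] // _; first by exists a; split; [left | rewrite /= maxn0].
have [x [Hx Ex]] := IH ltac:(done).
case: (leqP (f a) (maxs (map f (b :: s)))) => Hle.
  by exists x; split; [right | rewrite -Ex /= (maxn_idPr Hle)].
by exists a; split; [left | rewrite /= (maxn_idPl (ltnW Hle))].
Qed.

(* Membership lemmas for [List.In] over mathcomp sequences (trees carry no
   equality, so boolean membership is not available). *)
Lemma In_map_inv T U (f : T -> U) s y :
  List.In y (map f s) -> exists x, List.In x s /\ y = f x.
Proof. by move/List.in_map_iff => [x [<- Hx]]; exists x. Qed.

Lemma In_nth T (x0 : T) s i : i < size s -> List.In (nth x0 s i) s.
Proof. by elim: s i => [|a s IH] [|i] //= Hi; [left | right; exact: IH]. Qed.

Lemma In_flatten_inv T (L : seq (seq T)) x :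
  List.In x (flatten L) -> exists l, List.In l L /\ List.In x l.
Proof.
elim: L => [|l L IH] //= Hx; case: (List.in_app_or _ _ _ Hx) => [Hl|/IH [l' [H1 H2]]].
  by exists l; split; [left|].
by exists l'; split; [right|].
Qed.

Lemma In_flatten T (L : seq (seq T)) l x :
  List.In l L -> List.In x l -> List.In x (flatten L).
Proof.
by elim: L => [|l0 L IH] //= [<-|Hl] Hx; apply: List.in_or_app; [left | right; auto].
Qed.

Lemma map_ext_In T U (f g : T -> U) s :
  (forall x, List.In x s -> f x = g x) -> map f s = map g s.
Proof.
elim: s => [|a s IH] //= H; rewrite H; last by left.
by rewrite IH // => x Hx; apply: H; right.
Qed.

Lemma all_In T (a : pred T) s : (forall x, List.In x s -> a x) -> all a s.
Proof.
elim: s => [|b s IH] //= H; rewrite H /= ?IH //; last by left.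
by move=> x Hx; apply: H; right.
Qed.

Lemma In_all T (a : pred T) s x : all a s -> List.In x s -> a x.
Proof. by elim: s => [|b s IH] //= /andP [Hb Hs] [<-|Hx]; last exact: IH. Qed.

Definition tree_ind' (A : Type) (Pr : tree A -> Prop)
  (H : forall a ch, (forall c, List.In c ch -> Pr c) -> Pr (Node a ch)) :
  forall t, Pr t :=
  fix F t := match t with
    Node a ch => H a ch ((fix G l := match l return forall c, List.In c l -> Pr c with
       | [::] => fun c (hc : List.In c [::]) => False_ind _ hc
       | c0 :: l' => fun c hc => match hc with
           | or_introl e => eq_ind c0 Pr (F c0) c e
           | or_intror h => G l' c h end end) ch) end.

Definition rhs_ind' (D Q : Type) (Pr : rhs D Q -> Prop)
  (H1 : forall d args, (forall c, List.In c args -> Pr c) -> Pr (RD d args))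
  (H2 : forall q i args, (forall c, List.In c args -> Pr c) -> Pr (RCall q i args))
  (H3 : forall j, Pr (RPar j)) : forall r, Pr r :=
  fix F r := let G := (fix G l := match l return forall c, List.In c l -> Pr c with
       | [::] => fun c (hc : List.In c [::]) => False_ind _ hc
       | c0 :: l' => fun c hc => match hc with
           | or_introl e => eq_ind c0 Pr (F c0) c e
           | or_intror h => G l' c h end end) in
   match r with
   | RD d args => H1 d args (G args)
   | RCall q i args => H2 q i args (G args)
   | RPar j => H3 j end.

Lemma heightE A (a : A) ch : height (Node a ch) = (maxs (map (@height A) ch)).+1.
Proof. by []. Qed.

Lemma height_child A (a : A) ch c : List.In c ch -> height c < height (Node a ch).
Proof. by move=> Hc; rewrite heightE ltnS; apply: leq_maxs; apply: List.in_map. Qed.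

Lemma size_path_le_height A (t : tree A) pi : List.In pi (paths t) -> size pi <= height t.
Proof.
elim/tree_ind': t pi => a [|c0 ch] IH pi /=; first by case=> // <-.
move=> Hpi; have [pi' [Hflat ->]] := In_map_inv Hpi.
have [l [Hl Hp]] := @In_flatten_inv _ (map (@paths A) (c0 :: ch)) _ Hflat.
have [c [Hc El]] := In_map_inv Hl; subst l.
exact: leq_trans (IH c Hc pi' Hp) (height_child _ Hc).
Qed.

Section Transducer.
Variables (S D : finType) (rkS : S -> nat) (rkD : D -> nat) (M : mttr S D).
Local Notation Q := (st M).
Local Notation P := (la M).
Local Notation otree := (tree (olab D Q P)).
Local Notation itree := (tree (S + P)).
Local Notation dmy := (dummy M).

Lemma height_subst (u : otree) A :
  height (subst u A) <= height u + maxs (map (@height _) A).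
Proof.
elim/tree_ind': u => l ch IH.
have Hnode : height (Node l (map (fun x => subst x A) ch)) <=
             height (Node l ch) + maxs (map (@height _) A).
  rewrite !heightE addSn ltnS; apply: maxs_le => y Hy.
  have [z [Hz ->]] := In_map_inv Hy; have [c [Hc ->]] := In_map_inv Hz.
  apply: leq_trans (IH c Hc) _; rewrite leq_add2r; apply: leq_maxs; exact: List.in_map.
case: l IH Hnode => [d|q p|j] IH Hnode //=.
case: (ltnP j (size A)) => Hj; last by rewrite nth_default // leq_addr.
by apply: leq_trans (leq_addl _ _); apply: leq_maxs; apply: List.in_map; apply: In_nth.
Qed.

Fixpoint params_below m (u : otree) : bool :=
  match u with
  | Node l ch => (if l is OY j then j < m else true) && all (params_below m) ch
  end.

Lemma params_below_subst m (u : otree) X :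
  params_below (size X) u -> (forall x, List.In x X -> params_below m x) ->
  params_below m (subst u X).
Proof.
move=> Hu HX; elim/tree_ind': u Hu => l ch IH.
case: l IH => [d|q p|j] IH /=; [move=> Hall ..|move=> /andP [Hj Hall]];
  try (rewrite all_map; apply: all_In => x Hx; exact: IH x Hx (In_all Hall Hx)).
by apply: HX; rewrite (set_nth_default dmy) //; apply: In_nth.
Qed.

Lemma subst_subst (u : otree) X A : params_below (size X) u ->
  subst (subst u X) A = subst u (map (fun x => subst x A) X).
Proof.
elim/tree_ind': u => l ch IH.
case: l IH => [d|q p|j] IH /=; [move=> Hall ..|move=> /andP [Hj Hall]];
  try (congr Node; rewrite -map_comp; apply: map_ext_In => x Hx; exact: IH x Hx (In_all Hall Hx)).
by rewrite (nth_map dmy) // (set_nth_default dmy).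
Qed.

Lemma subst_nil (u : otree) : params_below 0 u -> subst u [::] = u.
Proof.
elim/tree_ind': u => l ch IH.
case: l IH => [d|q p|j] IH //= Hall; congr Node; rewrite -[RHS]map_id.
all: by apply: map_ext_In => x Hx; exact: IH x Hx (In_all Hall Hx).
Qed.

(* The tree <q,p>(y_1, ..., y_m) produced by \hat M on a look-ahead leaf. *)
Definition QP_leaf q p m : otree := Node (OQP D q p) (mkseq (fun j => Node (OY j) [::]) m).

Lemma params_below_QP_leaf m q p : params_below m (QP_leaf q p m).
Proof.
rewrite /= /mkseq all_map; apply/allP => j.
by rewrite mem_iota add0n /= => ->.
Qed.

Lemma map_subst_params m (B : seq otree) : size B = m ->
  map (fun x => subst x B) (mkseq (fun j => Node (OY j) [::]) m) = B.
Proof.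
move=> Hs; apply: (@eq_from_nth _ dmy); first by rewrite size_map size_mkseq.
move=> i; rewrite size_map size_mkseq => Hi.
by rewrite (nth_map dmy) ?size_mkseq // nth_mkseq //= (set_nth_default dmy) ?Hs.
Qed.

Definition weight c (l : olab D Q P) := if is_QPlab l then c else 1.

Fixpoint wheight c (u : otree) : nat :=
  match u with Node l ch => weight c l + maxs (map (wheight c) ch) end.

Lemma height_le_wheight c (u : otree) : 0 < c -> height u <= wheight c u.
Proof.
move=> Hc; elim/tree_ind': u => l ch IH.
rewrite heightE /= -add1n; apply: leq_add; first by rewrite /weight; case: is_QPlab.
apply: (@maxs_nth_le _ _ dmy dmy) => // j Hj; apply: IH; exact: In_nth.
Qed.

Lemma wheight_path c (u : otree) :
  exists pi, List.In pi (paths u) /\ wheight c u = sumn (map (weight c) pi).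
Proof.
elim/tree_ind': u => l [|c0 ch] IH; first by exists [:: l]; split; [left|].
have [x [Hx Ex]] := @maxs_attained _ (wheight c) (c0 :: ch) ltac:(done).
have [pi [Hpi Epi]] := IH x Hx.
exists (l :: pi); split; last first.
  have -> : wheight c (Node l (c0 :: ch)) =
            weight c l + maxs (map (wheight c) (c0 :: ch)) by [].
  by rewrite Ex Epi.
by apply: List.in_map; apply: (In_flatten (List.in_map _ _ _ Hx)) Hpi.
Qed.

Lemma path_weight c (pi : seq (olab D Q P)) :
  sumn (map (weight c) pi) <= size pi + c * nesting pi.
Proof.
elim: pi => [|l pi IH] //; rewrite /nesting /= -/(nesting pi) [weight c l]/weight.
by move: IH; case: is_QPlab => /= IH; lia.
Qed.

Lemma wheight_nesting c b (u : otree) :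
  (forall pi, List.In pi (paths u) -> nesting pi <= b) ->
  wheight c u <= height u + c * b.
Proof.
move=> Hb; have [pi [Hpi ->]] := wheight_path c u.
apply: leq_trans (path_weight c pi) _.
exact: leq_add (size_path_le_height Hpi) (leq_mul (leqnn c) (Hb _ Hpi)).
Qed.

Lemma height_subst_wheight c (u : otree) A B : 0 < c -> size A = size B ->
  (forall j, j < size A -> height (nth dmy A j) <= wheight c (nth dmy B j)) ->
  height (subst u A) <= wheight c (subst u B).
Proof.
move=> Hc Hs H; elim/tree_ind': u => l ch IH.
have Hnode : height (Node l (map (fun x => subst x A) ch)) <=
             wheight c (Node l (map (fun x => subst x B) ch)).
  rewrite heightE /= -add1n; apply: leq_add; first by rewrite /weight; case: is_QPlab.
  apply: (@maxs_nth_le _ _ dmy dmy); first by rewrite !size_map.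
  move=> j; rewrite size_map => Hj; rewrite !(nth_map dmy) //; exact: IH (In_nth dmy Hj).
case: l IH Hnode => [d|q p|j] IH Hnode //=.
case: (ltnP j (size A)) => Hj.
  by rewrite (set_nth_default dmy) // (set_nth_default dmy) -?Hs //; apply: H.
by rewrite !nth_default -?Hs //; apply: height_le_wheight.
Qed.

Lemma params_below_interp evs k m r : wf_rhs rkD k m r -> size evs = k ->
  (forall i q, i < k -> params_below (rkQ M q) (nth (fun _ => dmy) evs i q)) ->
  params_below m (interp evs r).
Proof.
move=> Hr Hs H; elim/rhs_ind': r Hr => [d args IH|q i args IH|j] /=.
- move=> /andP [_ Hall]; rewrite all_map.
  by apply: all_In => a Ha; exact: IH a Ha (In_all Hall Ha).
- move=> /andP [/andP [Hi /eqP Hsz] Hall]; apply: params_below_subst.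
    by rewrite size_map Hsz; apply: H.
  move=> x Hx; have [a [Ha ->]] := In_map_inv Hx; exact: IH a Ha (In_all Hall Ha).
- by move=> ->.
Qed.

Fixpoint rhs_height (r : rhs D Q) : nat :=
  match r with
  | RD _ args | RCall _ _ args => (maxs (map rhs_height args)).+1
  | RPar _ => 1
  end.

Lemma height_interp evs r E : (forall i q, height (nth (fun _ => dmy) evs i q) <= E) ->
  height (interp evs r) <= rhs_height r * E.+1.
Proof.
move=> HE; elim/rhs_ind': r => [d args IH|q i args IH|j] //=.
- rewrite mulSn -add1n; apply: leq_add => //; apply: maxs_le => y Hy.
  have [z [Hz ->]] := In_map_inv Hy; have [a [Ha ->]] := In_map_inv Hz.
  apply: leq_trans (IH a Ha) _; rewrite leq_mul2r; apply/orP; right.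
  by apply: leq_maxs; apply: List.in_map.
- apply: leq_trans (height_subst _ _) _.
  rewrite mulSn; apply: leq_add; first exact: leqW.
  apply: maxs_le => y Hy.
  have [z [Hz ->]] := In_map_inv Hy; have [a [Ha ->]] := In_map_inv Hz.
  apply: leq_trans (IH a Ha) _; rewrite leq_mul2r; apply/orP; right.
  by apply: leq_maxs; apply: List.in_map.
Qed.

Definition max_rule_height : nat :=
  \max_(q : Q) \max_(s : S) \max_(ps : (rkS s).-tuple P) rhs_height (rules M q s ps).

Lemma rule_height_le q s ps :
  size ps = rkS s -> rhs_height (rules M q s ps) <= max_rule_height.
Proof.
move=> Hs; pose tp : (rkS s).-tuple P := Tuple (introT eqP Hs).
have -> : ps = tval tp by [].
apply: leq_trans _ (leq_bigmax q); apply: leq_trans _ (leq_bigmax s).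
exact: (leq_bigmax (F := fun ps : (rkS s).-tuple P => rhs_height (rules M q s ps)) tp).
Qed.

Lemma bounded_output n : exists c, forall (s : itree) q,
  in_TSP rkS s -> height s <= n -> height (evalq s q) <= c.
Proof.
elim: n => [|n [c Hc]]; first by exists 0 => -[].
exists (maxn 2 (max_rule_height * c.+2)) => -[[s|p] ch] q /=; last first.
  move=> _ _; apply: leq_trans (leq_maxl _ _); rewrite ltnS; apply: maxs_le => y Hy.
  by have [z [Hz ->]] := In_map_inv Hy; have [k [_ ->]] := In_map_inv Hz.
move=> /andP [/eqP Hsz Hall] Hh.
have HE i q' : height (nth (fun _ => dmy) (map (@evalq _ _ M) ch) i q') <= c.+1.
  case: (ltnP i (size ch)) => Hi; last by rewrite nth_default ?size_map.
  set x0 : itree := Node (inr (lah M s [::])) [::].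
  rewrite (nth_map x0) //; apply/leqW/Hc; first exact: (all_nthP _ Hall).
  exact: leq_trans (leq_maxs (List.in_map _ _ _ (In_nth x0 Hi))) Hh.
apply: leq_trans (leq_maxr 2 _).
apply: leq_trans (height_interp _ HE) _; rewrite leq_mul2r; apply/orP; right.
by apply: rule_height_le; rewrite size_map.
Qed.

Lemma in_TS_TSP (t : itree) : in_TS rkS t -> in_TSP rkS t.
Proof.
elim/tree_ind': t => [[s|p] ch IH] //= /andP [-> Hall] /=.
by apply: all_In => x Hx; exact: IH x Hx (In_all Hall Hx).
Qed.

Hypothesis Hwf : wf_mttr rkS rkD M.

Lemma params_below_evalq t :
  in_TSP rkS t -> forall q, params_below (rkQ M q) (evalq t q).
Proof.
elim/tree_ind': t => [[s|p] ch IH] /=; last by move=> _ q; exact: params_below_QP_leaf.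
move=> /andP [/eqP Hsz Hall] q.
apply: (params_below_interp (k := rkS s)); first by apply: Hwf.2; rewrite size_map.
  by rewrite size_map.
move=> i q' Hi; rewrite -Hsz in Hi.
set x0 : itree := Node (inr (lah M s [::])) [::].
rewrite (nth_map x0) //; have Hin := In_nth x0 Hi.
exact: IH _ Hin (In_all Hall Hin) q'.
Qed.

Fixpoint trunc (d : nat) (t : itree) : itree :=
  match d with
  | 0 => Node (inr (hrun t)) [::]
  | d'.+1 => match t with Node l ch => Node l (map (trunc d') ch) end
  end.

Lemma hrun_trunc d t : hrun (trunc d t) = hrun t.
Proof.
elim: d t => [|d IH] [[s|p] ch] //=.
by congr lah; rewrite -map_comp; apply: eq_map => x /=; exact: IH.
Qed.

Lemma in_TSP_trunc d t : in_TSP rkS t -> in_TSP rkS (trunc d t).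
Proof.
elim: d t => [|d IH] [[s|p] ch] //=; last by rewrite /nilp size_map.
move=> /andP [Hs Hall]; rewrite size_map Hs /= all_map.
by apply: sub_all Hall => x /= /IH.
Qed.

Lemma height_trunc d t : height (trunc d t) <= d.+1.
Proof.
elim: d t => [|d IH] [l ch] //=; rewrite ltnS; apply: maxs_le => y Hy.
by have [z [Hz ->]] := In_map_inv Hy; have [c [_ ->]] := In_map_inv Hz.
Qed.

(* This is the invariant relating \hat M_q(t) to \hat M_q(trunc d t). *)
Definition dominates c m (u v : otree) :=
  [/\ params_below m u, params_below m v &
  forall A B, size A = m -> size B = m ->
  (forall j, j < m -> height (nth dmy A j) <= wheight c (nth dmy B j)) ->
  height (subst u A) <= wheight c (subst v B)].

Lemma dominates_interp c evs evs' k m r : wf_rhs rkD k m r ->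
  size evs = k -> size evs' = k ->
  (forall i q, i < k -> dominates c (rkQ M q)
    (nth (fun _ => dmy) evs i q) (nth (fun _ => dmy) evs' i q)) ->
  dominates c m (interp evs r) (interp evs' r).
Proof.
move=> Hr Hs Hs' H; split.
- by apply: (params_below_interp Hr Hs) => i q Hi; case: (H i q Hi).
- by apply: (params_below_interp Hr Hs') => i q Hi; case: (H i q Hi).
elim/rhs_ind': r Hr => [d args IH|q i args IH|j] /=.
- move=> /andP [_ Hall] A B HA HB HAB; rewrite -add1n; apply: leq_add => //.
  apply: (@maxs_nth_le _ _ dmy dmy); first by rewrite !size_map.
  move=> j; rewrite !size_map => Hj.
  rewrite !(nth_map dmy) ?size_map // !(nth_map (RPar 0)) //.
  have Hin := In_nth (RPar 0) Hj.
  exact: IH _ Hin (In_all Hall Hin) A B HA HB HAB.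
- move=> /andP [/andP [Hi /eqP Hsz] Hall] A B HA HB HAB.
  have [Hu Hv Hdom] := H i q Hi.
  rewrite !subst_subst ?size_map ?Hsz //; apply: Hdom; rewrite ?size_map ?Hsz //.
  move=> j Hj; rewrite -Hsz in Hj; rewrite -!map_comp !(nth_map (RPar 0)) //=.
  have Hin := In_nth (RPar 0) Hj.
  exact: IH _ Hin (In_all Hall Hin) A B HA HB HAB.
- move=> Hj A B HA HB HAB.
  by rewrite (set_nth_default dmy) ?HA // (set_nth_default dmy) ?HB //; apply: HAB.
Qed.

Lemma dominates_QP_leaf c q p : 0 < c ->
  dominates c (rkQ M q) (QP_leaf q p (rkQ M q)) (QP_leaf q p (rkQ M q)).
Proof.
move=> Hc; split; try exact: params_below_QP_leaf.
by move=> A B HA HB HAB; apply: height_subst_wheight => //; rewrite ?HA ?HB.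
Qed.

(* If all translations of inputs of height <= n have height <= c, then the
   translation of t is dominated by that of t cut at depth d, provided t is
   no higher than d + n: each cut-off subtree s contributes M_q(s) of height
   <= c in place of a <q,p>-node of weight c. *)
Lemma evalq_trunc_dominated c n : 0 < c ->
  (forall (s : itree) q, in_TSP rkS s -> height s <= n -> height (evalq s q) <= c) ->
  forall d t, in_TSP rkS t -> height t <= d + n ->
  forall q, dominates c (rkQ M q) (evalq t q) (evalq (trunc d t) q).
Proof.
move=> Hc Hn; elim=> [|d IH] t Ht Hh q.
  split; [exact: params_below_evalq | exact: params_below_QP_leaf |].
  move=> A B HA HB HAB /=; rewrite map_subst_params //=.
  apply: leq_trans (height_subst _ _) _; apply: leq_add; first exact: Hn.
  by apply: (@maxs_nth_le _ _ dmy dmy); rewrite ?HA ?HB.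
case: t Ht Hh => [[s|p] ch]; last by move=> _ _; exact: dominates_QP_leaf.
move=> /= /andP [/eqP Hsz Hall] Hh.
have -> : map (@hrun _ _ M) (map (trunc d) ch) = map (@hrun _ _ M) ch.
  by rewrite -map_comp; apply: eq_map => x; exact: hrun_trunc.
apply: (dominates_interp (k := rkS s)); rewrite ?size_map //.
  by apply: Hwf.2; rewrite size_map.
move=> i q' Hi; rewrite -Hsz in Hi.
set x0 : itree := Node (inr (lah M s [::])) [::].
rewrite (nth_map x0) // (nth_map x0) ?size_map // (nth_map x0) //.
have Hin := In_nth x0 Hi; apply: IH; first exact: In_all Hall Hin.
by rewrite -ltnS -addSn; apply: leq_trans Hh; exact: (height_child (inl s : S + P) Hin).
Qed.

Section LinearBound.
Variables (c b : nat).
Hypothesis c_gt0 : 0 < c.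
Hypothesis small_inputs :
  forall (s : itree) q, in_TSP rkS s -> height s <= 2 -> height (evalq s q) <= c.
Hypothesis nesting_bound :
  forall t : itree, in_TSP rkS t -> forall pi, List.In pi (paths (Mhat t)) -> nesting pi <= b.

Lemma truncation_step (t : itree) : in_TSP rkS t -> 2 < height t ->
  exists2 t' : itree, in_TSP rkS t' &
    height t' < height t /\ height (Mhat t) <= height (Mhat t') + c * b.
Proof.
move=> Ht Hh; set d := height t - 2; exists (trunc d t); first exact: in_TSP_trunc.
split; first by have := height_trunc d t; rewrite /d; lia.
have Hd : height t <= d + 2 by rewrite /d subnK // ltnW.
have Hle : height (Mhat t) <= wheight c (Mhat (trunc d t)).
  have [Hu Hv Hdom] := evalq_trunc_dominated c_gt0 small_inputs Ht Hd (q0 M).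
  rewrite Hwf.1 in Hu Hv Hdom.
  by rewrite /Mhat -(subst_nil Hu) -(subst_nil Hv); apply: Hdom.
apply: leq_trans Hle (wheight_nesting _ _).
exact: nesting_bound (in_TSP_trunc d Ht).
Qed.

Lemma height_Mhat_linear (t : itree) :
  in_TSP rkS t -> height (Mhat t) <= (c + c * b) * height t.
Proof.
have [n] := ubnP (height t); elim: n t => // n IH t Hn Ht.
have Hpos : 0 < height t by case: (t).
case: (leqP (height t) 2) => Hh.
  apply: leq_trans (small_inputs (q0 M) Ht Hh) _.
  by apply: leq_trans (leq_addr (c * b) c) _; apply: leq_pmulr.
have [t' Ht' [Hlt Hstep]] := truncation_step Ht Hh.
have IH' := IH t' (leq_trans Hlt Hn) Ht'.
apply: leq_trans Hstep _; apply: leq_trans (leq_add IH' (leqnn _)) _.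
have := leq_mul (leqnn (c + c * b)) Hlt; nia.
Qed.

End LinearBound.
End Transducer.

Theorem mainTheorem10 (S D : finType) (rkS : S -> nat) (rkD : D -> nat)
  (M : mttr S D) :
  wf_mttr rkS rkD M ->
  depth_proper rkS M ->
  finite_ML_nesting rkS M ->
  LHI rkS M.
Proof.
move=> Hwf _ [b Hb].
have [c Hc] := bounded_output rkS M 2.
exists (c.+1 + c.+1 * b) => t Ht.
apply: (height_Mhat_linear Hwf) (in_TS_TSP Ht) => // s q Hs Hh.
exact/leqW/Hc.
Qed.
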